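(* Let $C_\infty=(\mathbb{N},+)$ and let $\mathcal{A}$ be an $\mathbb{H}C_\infty$-module. For every integer $r\ge2$, $H^{r+1}(C_\infty,r;\mathcal{A})=0$.
   Context: General setting (for a commutative monoid $M$ with identity $e$, written multiplicatively; for $C_\infty$ read $xy$ as $x+y$, $e$ as $0$): $\mathbb{H}M$ has objects the elements of $M$ and morphisms $(x,y):x\to xy$, composition $(xy,z)(x,y)=(x,yz)$. An $\mathbb{H}M$-module $\mathcal{A}$ is a functor $\mathbb{H}M\to\mathbf{Ab}$: groups $\mathcal{A}(x)$ with $y_*:\mathcal{A}(x)\to\mathcal{A}(xy)$, $y_*z_*=(yz)_*$, $e_*=\mathrm{id}$. Tensor product $(\mathcal{A}\otimes_{\mathbb{H}M}\mathcal{B})(x)=\bigoplus_{zt=x}\mathcal{A}(z)\otimes\mathcal{B}(t)/(u_*a\otimes b=a\otimes u_*b)$; unit the constant module $\mathbb{Z}$; chain complexes of $\mathbb{H}M$-modules form a symmetric monoidal category with Koszul signs. A commutative DGA-algebra over $\mathbb{H}M$ is a commutative monoid $(\mathcal{A},\circ,\iota)$ there with a monoid morphism $\epsilon:\mathcal{A}\to\mathbb{Z}$, $\epsilon_x(a)=\tilde\epsilon(a)x$. Its reduced bar construction $\mathbf{B}(\mathcal{A})$ has $\mathbf{B}(\mathcal{A})_n(x)$ generated by $[\,]$ (degree $0$) and $[a_1|\cdots|a_p]$ with $a_i\in(\mathrm{coker}\,\iota)_{r_i}(x_i)$, $x_1\cdots x_p=x$, $p+\sum r_i=n$; differential $\partial[a_1|\cdots|a_p]=-\sum_i(-1)^{e_{i-1}}[\cdots|\partial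 a_i|\cdots]+\tilde\epsilon(a_1)x_{1*}[a_2|\cdots]+\sum_{i<p}(-1)^{e_i}[\cdots|a_i\circ a_{i+1}|\cdots]+(-1)^{e_p}\tilde\epsilon(a_p)x_{p*}[\cdots|a_{p-1}]$, $e_i=i+r_1+\cdots+r_i$; multiplication the signed shuffle product $[a_1|\cdots|a_p]\circ[a_{p+1}|\cdots|a_{p+q}]=\sum_\sigma(-1)^{e(\sigma)}[a_{\sigma^{-1}(1)}|\cdots|a_{\sigma^{-1}(p+q)}]$, $e(\sigma)=\sum_{\sigma(i)>\sigma(p+j)}(1+r_i)(1+r_{p+j})$; unit $[\,]$; augmentation $\mathbf{B}(\mathcal{A})_0\cong\mathbb{Z}$. It is again such an algebra, so $\mathbf{B}^r$ is defined. $\mathcal{Z}M$: $\mathcal{Z}M(x)$ free abelian on $\{(u,v):uv=x\}$, $y_*(u,v)=(yu,v)$, $(u,v)\circ(w,t)=(uw,vt)$, unit $(e,e)$, degree $0$, augmentation $(u,v)\mapsto$ generator of $\mathbb{Z}(x)$. $H^n(M,r;\mathcal{A})=H^n(\mathrm{Hom}_{\mathbb{H}M}(\mathbf{B}^r(\mathcal{Z}M),\mathcal{A}))$. *)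

From mathcomp Require Import all_boot all_algebra.
Unset Printing Implicit Defensive.
Import GRing.Theory.
Local Open Scope ring_scope.

(** The category H C_oo has objects n : nat and, for each y,
  exactly one morphism (x,y) : x -> x + y.  Hence H C_oo is the poset
  category (N, <=), and an H C_oo-module (functor H C_oo -> Ab) is a family
  of abelian groups [Amod x] with additive maps [mor x y : Amod x -> Amod y]
  for x <= y (so y_* on Amod x is [mor x (x + y)]), functorial.
  ([mor x y] for x > y is irrelevant junk, never used.) *)
Record HCmod := {
  Amod : nat -> zmodType;
  mor : forall x y : nat, Amod x -> Amod y;
  mor_add : forall x y, (x <= y)%N -> forall a b, mor x y (a + b) = mor x y a + mor x y b;
  mor_id : forall x a, mor x x a = a;
  mor_comp : forall x y z, (x <= y)%N -> (y <= z)%N ->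
     forall a, mor y z (mor x y a) = mor x z a
}.

(** All algebras we need (Z C_oo and its iterated reduced bar constructions)
  are, in each degree, free H C_oo-modules on explicit basis elements:
  a basis element g of weight [wt g] generates a copy of the representable
  module Z[H C_oo(wt g, -)], i.e. it lives in A(wt g) and its image in A(x)
  (x >= wt g) is (x - wt g)_* g.  A formal linear combination
  [seq (c_k, h_k)] occurring as the value of an operation landing in A(w)
  stands for  sum_k c_k (w - wt h_k)_* h_k .
  Basis elements are encoded as rose trees. *)
Inductive tree : Type := Leaf of nat | Node of seq tree.

Record balg := BAlg {
  bas : tree -> bool;
  isu : tree -> bool;                      (* is the unit basis element iota(1) *)
  deg : tree -> nat;
  wt  : tree -> nat;                       (* weight: g lives in A(wt g) *)
  dif : tree -> seq (int * tree);
  mul : tree -> tree -> seq (int * tree);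
  aug : tree -> int
}.

Definition sgn (n : nat) : int := (-1) ^+ n.

(** Z C_oo: Z C_oo(x) is free on pairs (u,v), u + v = x, with y_*(u,v) = (y+u,v);
  so it is free on the basis elements b_v := (0,v) of weight v (= [Leaf v]),
  with (u,v) = u_* b_v;  b_v o b_w = b_(v+w), unit b_0, degree 0,
  augmentation 1, zero differential. *)
Definition ZN : balg := BAlg
  (fun g => if g is Leaf _ then true else false)
  (fun g => if g is Leaf v then v == 0%N else false)
  (fun _ => 0%N)
  (fun g => if g is Leaf v then v else 0%N)
  (fun _ => [::])
  (fun g h => match g, h with
              | Leaf v, Leaf w => [:: (1, Leaf (v + w))]
              | _, _ => [::] end)
  (fun g => if g is Leaf _ then 1 else 0).

(** Signed shuffles: [shuf dg s t] lists the (sign, shuffle) pairs of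
  [s ++ t] with sign (-1)^e(sigma), e(sigma) = sum over pairs (a in s, b in t)
  with a placed after b of (1 + dg a)(1 + dg b). *)
Definition wsum (dg : tree -> nat) (s : seq tree) : nat :=
  sumn [seq (dg x).+1 | x <- s].

Fixpoint shuf (dg : tree -> nat) (s t : seq tree) {struct s} : seq (int * seq tree) :=
  match s with
  | [::] => [:: (1, t)]
  | a :: s' =>
    let fix shuf_s (t : seq tree) : seq (int * seq tree) :=
      match t with
      | [::] => [:: (1, s)]
      | b :: t' =>
          [seq (cu.1, a :: cu.2) | cu <- shuf dg s' t] ++
          [seq (sgn ((dg b).+1 * wsum dg s) * cu.1, b :: cu.2) | cu <- shuf_s t']
      end in shuf_s t
  end.

Definition x0 : tree := Leaf 0.

(** Differential of the reduced bar construction on the basis element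
   [a_1|...|a_p] (encoded [Node s]), following the paper:
   d[a_1|..|a_p] = - sum_i (-1)^(e_(i-1)) [..|d a_i|..] + eps(a_1) x_1*[a_2|..]
                   + sum_(i<p) (-1)^(e_i) [..|a_i o a_(i+1)|..]
                   + (-1)^(e_p) eps(a_p) x_p*[..|a_(p-1)],
   e_i = i + r_1 + .. + r_i; terms are taken in coker iota, i.e. the
   unit basis element is dropped. *)
Definition bar_e (X : balg) (s : seq tree) (i : nat) : nat :=
  (i + sumn [seq deg X a | a <- take i s])%N.

Definition bar_dif (X : balg) (s : seq tree) : seq (int * tree) :=
  let p := size s in
  let t1 := flatten [seq [seq (- sgn (bar_e X s i) * ch.1, Node (set_nth x0 s i ch.2))
                         | ch <- [seq ch <- dif X (nth x0 s i) | ~~ isu X ch.2]]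
                    | i <- iota 0 p] in
  let t2 := if s is a :: s' then [:: (aug X a, Node s')] else [::] in
  let t3 := flatten [seq [seq (sgn (bar_e X s i.+1) * ch.1,
                               Node (take i s ++ ch.2 :: drop i.+2 s))
                         | ch <- [seq ch <- mul X (nth x0 s i) (nth x0 s i.+1)
                                 | ~~ isu X ch.2]]
                    | i <- iota 0 p.-1] in
  let t4 := if s is [::] then [::]
            else [:: (sgn (bar_e X s p) * aug X (nth x0 s p.-1), Node (take p.-1 s))] in
  t1 ++ t2 ++ t3 ++ t4.

(** The reduced bar construction B(X): basis = sequences [a_1|..|a_p] of
  non-unit basis elements of X (tensor products over H C_oo of free
  modules on representables are free on the concatenated basis), degree
  p + sum r_i, weight sum of weights, shuffle product, unit [ ],
  augmentation 1 on [ ] and 0 elsewhere. *)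
Definition bar (X : balg) : balg := BAlg
  (fun g => if g is Node s then all (fun a => bas X a && ~~ isu X a) s else false)
  (fun g => if g is Node s then nilp s else false)
  (fun g => if g is Node s then (size s + sumn [seq deg X a | a <- s])%N else 0%N)
  (fun g => if g is Node s then sumn [seq wt X a | a <- s] else 0%N)
  (fun g => if g is Node s then bar_dif X s else [::])
  (fun g h => match g, h with
              | Node s, Node t => [seq (cu.1, Node cu.2) | cu <- shuf (deg X) s t]
              | _, _ => [::] end)
  (fun g => if g is Node [::] then 1 else 0).

Definition barZ (r : nat) : balg := iter r bar ZN.

(** Cochains of Hom_{H C_oo}(X, A): a homomorphism out of the free module on
  the basis is determined by an element f g of A(wt g) for each basis
  element g.  Coboundary: (delta f)(g) = f(d g). *)
Definition cobound (X : balg) (A : HCmod) (f : forall g, Amod A (wt X g)) (g : tree)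
  : Amod A (wt X g) :=
  \sum_(ch <- dif X g) mor A (wt X ch.2) (wt X g) (f ch.2) *~ ch.1.

Definition Hn_vanishes (X : balg) (A : HCmod) (n : nat) : Prop :=
  forall f : forall g, Amod A (wt X g),
    (forall g, bas X g -> deg X g = n.+1 -> cobound X A f g = 0) ->
    exists phi : forall g, Amod A (wt X g),
      forall g, bas X g -> deg X g = n -> f g = cobound X A phi g.

(* For r >= 2, the basis elements of B^r(Z C_oo) in degrees r+1 and r+2 are the
   iterated singleton brackets [[..[b_v|b_w]..]] and [[..[b_u|b_v|b_w]..]] with
   u, v, w > 0, and on them the differential is, up to the sign (-1)^(r-1), the
   differential of [b_v|b_w] and [b_u|b_v|b_w] in B(Z C_oo).  Hence an
   (r+1)-cocycle amounts to elements c(v,w) of A(v+w), compatible with the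
   structure maps, satisfying the 2-cocycle identity on the positive integers.
   Such a c is the coboundary of P with P(1) = 0 and P(m+1) = P(m) - c(m,1):
   induct on w, using the cocycle identity at (v, w, 1). *)

From mathcomp Require Import all_boot all_algebra ssrAC zify.
Import GRing.Theory.
Local Open Scope ring_scope.

Section HCmodTheory.
Variable A : HCmod.

Lemma mor0 x y : (x <= y)%N -> mor A x y 0 = 0.
Proof.
by move=> le_xy; apply: (addrI (mor A x y 0)); rewrite -mor_add // !addr0.
Qed.

Lemma morN x y a : (x <= y)%N -> mor A x y (- a) = - mor A x y a.
Proof.
by move=> le_xy; apply/eqP; rewrite -subr_eq0 opprK -mor_add // addNr mor0.
Qed.

Lemma morB x y a b : (x <= y)%N -> mor A x y (a - b) = mor A x y a - mor A x y b.
Proof. by move=> le_xy; rewrite mor_add // morN. Qed.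

Lemma morMz x y a (z : int) : (x <= y)%N -> mor A x y (a *~ z) = mor A x y a *~ z.
Proof.
move=> le_xy; have morMn n : mor A x y (a *+ n) = mor A x y a *+ n.
  by elim: n => [|n IHn]; rewrite ?mor0 // !mulrS mor_add // IHn.
by case: z => n; rewrite ?NegzE ?mulrNz ?morN // -!pmulrn morMn.
Qed.

Lemma mor_sum x y (I : Type) (r : seq I) (F : I -> Amod A x) : (x <= y)%N ->
  mor A x y (\sum_(i <- r) F i) = \sum_(i <- r) mor A x y (F i).
Proof.
move=> le_xy; elim: r => [|i r IHr]; first by rewrite !big_nil mor0.
by rewrite !big_cons mor_add // IHr.
Qed.

Lemma mor_inj x y : x = y -> injective (mor A x y).
Proof. by move=> <- a b; rewrite !mor_id. Qed.

End HCmodTheory.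

(* The p's, a's and b's cancel in pairs. *)
Lemma cocycle_rearrange (V : zmodType) (a b d e g p x : V) :
  (p - e + a) - (p - g + b) + x - (a - b + d) = 0 -> x = e - g + d.
Proof.
move=> h; apply/eqP; rewrite -subr_eq0 -h; apply/eqP.
rewrite !opprD !opprK [RHS](AC ((3*3*1)*3) ((7*((2*5)*10))*(((1*4)*(3*8))*(9*6)))).
by rewrite /= !subrr !addr0.
Qed.

Section PositiveCocycle.
Variables (A : HCmod) (c : nat -> nat -> forall N, Amod A N).
Hypothesis c_mor : forall v w N M, (v + w <= N)%N -> (N <= M)%N ->
  mor A N M (c v w N) = c v w M.
Hypothesis c_cocycle : forall u v w, (0 < u)%N -> (0 < v)%N -> (0 < w)%N ->
  c v w (u + v + w) - c (u + v) w (u + v + w) + c u (v + w) (u + v + w)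
  - c u v (u + v + w) = 0.

Fixpoint primitive (n : nat) : Amod A n :=
  match n return Amod A n with
  | 0 => 0
  | m.+1 => if m is 0 then 0 else mor A m m.+1 (primitive m) - c m 1 m.+1
  end.

Definition coboundary_eq v w N :=
  c v w N = mor A w N (primitive w) - mor A (v + w) N (primitive (v + w))
            + mor A v N (primitive v).

Lemma coboundary_eq_mor v w N :
  coboundary_eq v w (v + w) -> (v + w <= N)%N -> coboundary_eq v w N.
Proof.
rewrite /coboundary_eq => cvw le_vwN.
rewrite -(c_mor _ _ _ _ (leqnn _) le_vwN) cvw mor_add // morB // mor_id.
by rewrite !mor_comp // ?leq_addl ?leq_addr.
Qed.

Lemma coboundary_eq1 v : (0 < v)%N -> coboundary_eq v 1 (v + 1).
Proof.
case: v => // v _; rewrite /coboundary_eq addn1 /= mor0 // mor_id.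
by rewrite sub0r opprB subrK.
Qed.

Lemma coboundary_eqS v w : (0 < v)%N -> (0 < w)%N ->
  coboundary_eq v w (v + w) -> coboundary_eq v w.+1 (v + w.+1).
Proof.
move=> v_gt0 w_gt0 cvw; rewrite -addn1 addnA.
have cw1 : coboundary_eq w 1 (v + w + 1).
  by apply: coboundary_eq_mor; [exact: coboundary_eq1 | lia].
have cvw1 : coboundary_eq (v + w) 1 (v + w + 1) by apply: coboundary_eq1; lia.
have cvwN : coboundary_eq v w (v + w + 1).
  by apply: coboundary_eq_mor; [exact: cvw | lia].
have := c_cocycle v w 1 v_gt0 w_gt0 isT.
rewrite cw1 cvw1 cvwN -addnA; exact: cocycle_rearrange.
Qed.

Lemma cocycle_coboundary v w : (0 < v)%N -> (0 < w)%N ->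
  c v w (v + w) = mor A w (v + w) (primitive w)
                  - mor A (v + w) (v + w) (primitive (v + w))
                  + mor A v (v + w) (primitive v).
Proof.
move=> v_gt0; elim: w => // [[_ _|w IHw _]]; first exact: coboundary_eq1.
exact: coboundary_eqS (IHw isT).
Qed.

End PositiveCocycle.

Definition nonunit_bas (X : balg) (g : tree) : bool := bas X g && ~~ isu X g.

Definition dif_nonunit (X : balg) (g : tree) : seq (int * tree) :=
  [seq ch <- dif X g | ~~ isu X ch.2].

Section BarSingleton.
Variable X : balg.

Lemma wt_bar1 t : wt (bar X) (Node [:: t]) = wt X t.
Proof. by rewrite /= addn0. Qed.

Lemma deg_bar_cons t s :
  deg (bar X) (Node (t :: s)) = ((deg X t).+1 + deg (bar X) (Node s))%N.
Proof. by rewrite /= addSn addnCA. Qed.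

Lemma nonunit_bas_bar1 t : nonunit_bas (bar X) (Node [:: t]) = nonunit_bas X t.
Proof. by rewrite /nonunit_bas /= !andbT. Qed.

Lemma aug_bar_nonunit g : ~~ isu (bar X) g -> aug (bar X) g = 0.
Proof. by case: g => [//|[]]. Qed.

Lemma dif_bar1 t : aug X t = 0 ->
  dif (bar X) (Node [:: t]) =
  [seq (- ch.1, Node [:: ch.2]) | ch <- dif_nonunit X t]
  ++ nseq 2 (0, Node [::]).
Proof.
move=> aug_t; rewrite /= /bar_dif /= aug_t mulr0 cats0.
by congr (_ ++ _); apply: eq_map => ch; rewrite /sgn expr0 mulN1r.
Qed.

End BarSingleton.

Lemma deg_barZ_ge k g : nonunit_bas (barZ k) g -> (k <= deg (barZ k) g)%N.
Proof.
elim: k g => // k IHk [//|[//|a s]] /andP[/= /andP[/andP[bas_a nu_a] _] _].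
have := IHk a; rewrite /nonunit_bas bas_a nu_a => /(_ isT); lia.
Qed.

Definition nest (k : nat) (t : tree) : tree := iter k (fun s => Node [:: s]) t.

Lemma wt_nest k t : wt (barZ k.+1) (nest k t) = wt (barZ 1) t.
Proof. by elim: k => // k IHk; rewrite -IHk; apply: wt_bar1. Qed.

Lemma deg_nest k t : deg (barZ k.+1) (nest k t) = (k + deg (barZ 1) t)%N.
Proof. by elim: k => // k IHk; rewrite (deg_bar_cons (barZ k.+1)) IHk addn0. Qed.

Lemma nonunit_bas_nest k t :
  nonunit_bas (barZ k.+1) (nest k t) = nonunit_bas (barZ 1) t.
Proof. by elim: k => // k IHk; rewrite -IHk; apply: nonunit_bas_bar1. Qed.

Definition bracket1 v := Node [:: Leaf v].
Definition bracket2 v w := Node [:: Leaf v; Leaf w].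
Definition bracket3 u v w := Node [:: Leaf u; Leaf v; Leaf w].

Lemma barZ_bas_deg_succ k g : bas (barZ k.+1) g -> deg (barZ k.+1) g = k.+2 ->
  exists v w, g = nest k (bracket2 v.+1 w.+1).
Proof.
elim: k g => [|k IHk] [//|s] bas_g deg_g.
  case: s bas_g deg_g => [|[[|v]|//] [|[[|w]|//] [|c s]]] //= _; try lia.
  by exists v, w.
case: s bas_g deg_g => [//|a [|b s]].
  move=> /andP[/andP[bas_a _] _]; rewrite deg_bar_cons addn0 => -[deg_a].
  by have [v [w ->]] := IHk a bas_a deg_a; exists v, w.
move=> /and3P[nu_a nu_b _]; rewrite !(deg_bar_cons (barZ k.+1)).
have := deg_barZ_ge k.+1 a nu_a; have := deg_barZ_ge k.+1 b nu_b; lia.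
Qed.

(* The two null terms are the augmentation terms of the outermost bracket. *)
Lemma dif_nest j B : ~~ isu (barZ 1) B ->
  dif (barZ j.+2) (nest j.+1 B) =
  [seq (sgn j.+1 * ch.1, nest j.+1 ch.2) | ch <- dif_nonunit (barZ 1) B]
  ++ nseq 2 (0, Node [::]).
Proof.
move=> nu_B; elim: j => [|j IHj].
  rewrite (dif_bar1 (barZ 1)) ?aug_bar_nonunit //.
  by congr (_ ++ _); apply: eq_map => ch; rewrite /sgn expr1 mulN1r.
rewrite (dif_bar1 (barZ j.+2)) ?aug_bar_nonunit //; congr (_ ++ _).
rewrite {1}/dif_nonunit IHj filter_cat [filter _ [:: _; _]]/= cats0.
rewrite filter_map (eq_filter (a2 := predT)) // filter_predT -map_comp.
by apply: eq_map => ch; rewrite /= /sgn [in RHS]exprS mulN1r mulNr.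
Qed.

Lemma cobound_cat_null {X A f g s n t} : dif X g = s ++ nseq n (0, t) ->
  cobound X A f g = \sum_(ch <- s) mor A (wt X ch.2) (wt X g) (f ch.2) *~ ch.1.
Proof.
move=> dif_g; rewrite /cobound dif_g big_cat /= -[RHS]addr0; congr (_ + _).
by elim: n {dif_g} => [|n IHn]; rewrite ?big_nil // big_cons mulr0z add0r.
Qed.

Lemma wt_bracket1 v : wt (barZ 1) (bracket1 v) = v.
Proof. by rewrite /= addn0. Qed.

Lemma wt_bracket2 v w : wt (barZ 1) (bracket2 v w) = (v + w)%N.
Proof. by rewrite /= addn0. Qed.

Lemma wt_bracket3 u v w : wt (barZ 1) (bracket3 u v w) = (u + v + w)%N.
Proof. by rewrite /= addn0 addnA. Qed.

Lemma dif_bracket2 v w :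
  dif_nonunit (barZ 1) (bracket2 v.+1 w.+1) =
  [:: (1, bracket1 w.+1); (-1, bracket1 (v.+1 + w.+1)); (1, bracket1 v.+1)].
Proof. by []. Qed.

Lemma dif_bracket3 u v w :
  dif_nonunit (barZ 1) (bracket3 u.+1 v.+1 w.+1) =
  [:: (1, bracket2 v.+1 w.+1); (-1, bracket2 (u.+1 + v.+1) w.+1);
      (1, bracket2 u.+1 (v.+1 + w.+1)); (-1, bracket2 u.+1 v.+1)].
Proof. by []. Qed.

Lemma sum_dif_bracket2 (V : zmodType) (F : tree -> V) v w :
  \sum_(ch <- dif_nonunit (barZ 1) (bracket2 v.+1 w.+1)) F ch.2 *~ ch.1 =
  F (bracket1 w.+1) - F (bracket1 (v.+1 + w.+1)) + F (bracket1 v.+1).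
Proof.
by rewrite dif_bracket2 !big_cons big_nil /= addr0 !mulr1z mulrN1z addrA.
Qed.

Lemma sum_dif_bracket3 (V : zmodType) (F : tree -> V) u v w :
  \sum_(ch <- dif_nonunit (barZ 1) (bracket3 u.+1 v.+1 w.+1)) F ch.2 *~ ch.1 =
  F (bracket2 v.+1 w.+1) - F (bracket2 (u.+1 + v.+1) w.+1)
  + F (bracket2 u.+1 (v.+1 + w.+1)) - F (bracket2 u.+1 v.+1).
Proof.
by rewrite dif_bracket3 !big_cons big_nil /= addr0 !mulr1z !mulrN1z !addrA.
Qed.

Lemma mulrz_sgnK (V : zmodType) (x : V) n : x *~ sgn n *~ sgn n = x.
Proof. by rewrite -mulrzA /sgn -exprMn mulrNN mulr1 expr1n mulr1z. Qed.

Section NestedCochain.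
Variables (A : HCmod) (j : nat).

Definition fnest (f : forall g, Amod A (wt (barZ j.+2) g)) (t : tree) (N : nat) :
  Amod A N :=
  mor A (wt (barZ j.+2) (nest j.+1 t)) N (f (nest j.+1 t)).

Lemma mor_fnest f t N M : (wt (barZ 1) t <= N)%N -> (N <= M)%N ->
  mor A N M (fnest f t N) = fnest f t M.
Proof. by move=> le_tN le_NM; rewrite /fnest mor_comp // wt_nest. Qed.

Lemma fnest_wt (P : forall n, Amod A n) t N :
  fnest (fun g => P (wt (barZ j.+2) g)) t N =
  mor A (wt (barZ 1) t) N (P (wt (barZ 1) t)).
Proof. by rewrite /fnest wt_nest. Qed.

Lemma mor_cobound_nest f B N : ~~ isu (barZ 1) B ->
  all (fun ch => wt (barZ 1) ch.2 <= wt (barZ 1) B)%N (dif_nonunit (barZ 1) B) ->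
  (wt (barZ 1) B <= N)%N ->
  mor A (wt (barZ j.+2) (nest j.+1 B)) N (cobound (barZ j.+2) A f (nest j.+1 B)) =
  (\sum_(ch <- dif_nonunit (barZ 1) B) fnest f ch.2 N *~ ch.1) *~ sgn j.+1.
Proof.
move=> nu_B wt_dif le_BN.
rewrite (cobound_cat_null (dif_nest j B nu_B)) big_map mor_sum ?wt_nest // mulrz_suml.
elim: (dif_nonunit _ _) wt_dif => [|ch s IHs]; rewrite ?big_nil // !big_cons.
move=> /andP[le_chB /IHs ->].
by rewrite morMz ?wt_nest // mor_comp ?wt_nest // mulrzA_C.
Qed.

Lemma cobound_nest_bracket2 (P : forall n, Amod A n) v w :
  mor A (wt (barZ j.+2) (nest j.+1 (bracket2 v.+1 w.+1))) (v.+1 + w.+1)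
    (cobound (barZ j.+2) A (fun g => P (wt (barZ j.+2) g))
       (nest j.+1 (bracket2 v.+1 w.+1))) =
  (mor A w.+1 (v.+1 + w.+1) (P w.+1)
   - mor A (v.+1 + w.+1) (v.+1 + w.+1) (P (v.+1 + w.+1))
   + mor A v.+1 (v.+1 + w.+1) (P v.+1)) *~ sgn j.+1.
Proof.
rewrite mor_cobound_nest ?wt_bracket2 //; last first.
  by rewrite dif_bracket2 /= ?wt_bracket1; lia.
by rewrite (sum_dif_bracket2 _ (fnest _ ^~ _)) !fnest_wt !wt_bracket1.
Qed.

(* The sign cancels the one acquired by the differential through the j+1
   outer brackets. *)
Definition cochain2 f v w N : Amod A N := fnest f (bracket2 v w) N *~ sgn j.+1.

Lemma mor_cochain2 f v w N M : (v + w <= N)%N -> (N <= M)%N ->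
  mor A N M (cochain2 f v w N) = cochain2 f v w M.
Proof. by move=> le_vwN le_NM; rewrite morMz // mor_fnest ?wt_bracket2. Qed.

Lemma cochain2_cocycle f :
  (forall g, bas (barZ j.+2) g -> deg (barZ j.+2) g = j.+4 ->
     cobound (barZ j.+2) A f g = 0) ->
  forall u v w, (0 < u)%N -> (0 < v)%N -> (0 < w)%N ->
  cochain2 f v w (u + v + w) - cochain2 f (u + v) w (u + v + w)
  + cochain2 f u (v + w) (u + v + w) - cochain2 f u v (u + v + w) = 0.
Proof.
move=> f_cocycle [|u] [|v] [|w] // _ _ _.
set B := nest j.+1 (bracket3 u.+1 v.+1 w.+1).
have /andP[bas_B _] : nonunit_bas (barZ j.+2) B by rewrite nonunit_bas_nest.
have deg_B : deg (barZ j.+2) B = j.+4 by rewrite deg_nest addn3.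
have /(congr1 (mor A _ (u.+1 + v.+1 + w.+1))) := f_cocycle B bas_B deg_B.
rewrite mor0 ?wt_nest ?wt_bracket3 // mor_cobound_nest ?wt_bracket3 //; last first.
  by rewrite dif_bracket3 /= ?wt_bracket2; lia.
by rewrite (sum_dif_bracket3 _ (fnest f ^~ _)) => <-; rewrite !mulrzDl !mulNrz.
Qed.

End NestedCochain.

Theorem corollary7p13 :
  forall (r : nat) (A : HCmod), (2 <= r)%N -> Hn_vanishes (barZ r) A r.+1.
Proof.
move=> [|[|j]] A // _ f f_cocycle.
pose c := cochain2 A j f.
have c_cocycle := cochain2_cocycle A j f f_cocycle.
exists (fun g => primitive A c (wt (barZ j.+2) g)) => g bas_g deg_g.
have [v [w ->]] := barZ_bas_deg_succ j.+1 g bas_g deg_g.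
apply: (mor_inj A _ _ (wt_nest j.+1 (bracket2 v.+1 w.+1))).
rewrite wt_bracket2 cobound_nest_bracket2.
rewrite -(cocycle_coboundary A c (mor_cochain2 A j f) c_cocycle) //.
by rewrite /c /cochain2 mulrz_sgnK.
Qed.
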